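(* Let $\mathbf{k}$ be a commutative unital ring, $R$ a $\mathbf{k}$-algebra, $\lambda,\kappa\in\mathbf{k}$, and $P$ an extended Rota-Baxter operator of weight $(\lambda,\kappa)$ on $R$. Let $\tilde P:=-\lambda\,\mathrm{id}_R-P$. (1) For all $u,v\in R$, $$P(u)\tilde P(v)=P(u\tilde P(v))+\tilde P(P(u)v)-\kappa uv,\qquad \tilde P(u)P(v)=\tilde P(uP(v))+P(\tilde P(u)v)-\kappa uv.$$ (2) For all $a,b\in\mathbf{k}$, the operator $Q:=aP+b\tilde P$ is an extended Rota-Baxter operator of weight $\big(\lambda(a+b),\ ab\lambda^2+(a-b)^2\kappa\big)$.
   Context: For $\lambda,\kappa\in\mathbf{k}$, an extended Rota-Baxter operator of weight $(\lambda,\kappa)$ on a $\mathbf{k}$-algebra $R$ is a $\mathbf{k}$-linear map $P:R\to R$ such that $P(x)P(y)=P(xP(y))+P(P(x)y)+\lambda P(xy)+\kappa xy$ for all $x,y\in R$. *)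

From mathcomp Require Import all_boot all_algebra.
Set Implicit Arguments. Unset Strict Implicit. Unset Printing Implicit Defensive.
Import GRing.Theory.
Local Open Scope ring_scope.

Definition extended_RB (k : comRingType) (R : algType k) (lam kap : k)
  (P : R -> R) : Prop :=
  linear P /\
  forall x y : R,
    P x * P y = P (x * P y) + P (P x * y) + lam *: P (x * y) + kap *: (x * y).

Definition tildeP (k : comRingType) (R : algType k) (lam : k) (P : R -> R)
  : R -> R := fun x => - (lam *: x) - P x.

(* For (2), note that Q = a P + b (-lam id - P) = (a - b) P - b lam id,
   and that extended Rota-Baxter operators are stable under scaling, c P
   having weight (c lam, c^2 kap), and under shifting by a multiple of the
   identity, P + d id having weight (lam - 2 d, kap - lam d + d^2).  Composing
   the two with c = a - b and d = - b lam gives the announced weight. *)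

From HB Require Import structures.
From mathcomp Require Import all_boot all_algebra.
From mathcomp.algebra_tactics Require Import ring.
Set Implicit Arguments. Unset Strict Implicit. Unset Printing Implicit Defensive.
Import GRing.Theory.
Local Open Scope ring_scope.

Section LinearCombination.
Variables (k : comPzRingType) (V : lmodType k) (s : seq V).

Definition lcomb (c : nat -> k) : V := \sum_(i < size s) c i *: s`_i.

Lemma lcomb_nth j : (j < size s)%N -> s`_j = lcomb (fun i => (i == j)%:R).
Proof.
move=> lt_j_s; rewrite /lcomb (bigD1 (Ordinal lt_j_s)) //= eqxx scale1r.
rewrite big1 ?addr0 // => i; rewrite -val_eqE /= => /negPf->.
by rewrite scale0r.
Qed.

Lemma lcombD c d : lcomb c + lcomb d = lcomb (fun i => c i + d i).
Proof. by rewrite /lcomb -big_split; apply: eq_bigr => i _; rewrite scalerDl. Qed.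

Lemma lcombN c : - lcomb c = lcomb (fun i => - c i).
Proof. by rewrite /lcomb -sumrN; apply: eq_bigr => i _; rewrite scaleNr. Qed.

Lemma lcombZ a c : a *: lcomb c = lcomb (fun i => a * c i).
Proof. by rewrite /lcomb scaler_sumr; apply: eq_bigr => i _; rewrite scalerA. Qed.

Lemma eq_lcomb c d : c =1 d -> lcomb c = lcomb d.
Proof. by move=> eq_cd; apply: eq_bigr => i _; rewrite eq_cd. Qed.

End LinearCombination.

(* [lmodule_ring atoms] proves an identity between k-linear combinations of
   the terms in [atoms]: the j-th atom becomes [lcomb s] of the j-th unit
   vector, both sides are collected into a single [lcomb s], and coefficients
   are compared with [ring], index by index.  An atom must be listed before
   the atoms occurring inside it, so that it is abstracted first. *)
Ltac lcomb_atoms s atoms n :=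
  lazymatch atoms with
  | ?a :: ?atoms' =>
      rewrite [a](_ : a = lcomb s (fun i => (i == n)%:R));
        last exact: (@lcomb_nth _ _ s n);
      lcomb_atoms s atoms' n.+1
  | _ => idtac
  end.

Ltac coef_ring :=
  first [ by move=> ? /=; ring | case=> [|?]; [by rewrite /=; ring | coef_ring] ].

Ltac lmodule_ring atoms :=
  let s := fresh "s" in
  pose s := atoms; lcomb_atoms s atoms 0%N;
  rewrite ?(lcombN, lcombZ, lcombD); apply: eq_lcomb; coef_ring.

Ltac expand_linear fD fN fZ :=
  rewrite ?(fD, fN, fZ, mulrDl, mulrDr, mulrN, mulNr, scalerDr, scalerN);
  rewrite -?scalerAl -?scalerAr ?fZ.

Lemma eq_extended_RB (k : comNzRingType) (R : algType k) (lam kap : k)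
    (P Q : R -> R) :
  P =1 Q -> extended_RB lam kap P -> extended_RB lam kap Q.
Proof.
move=> eqPQ [P_lin P_RB].
by split=> [a x y | x y]; rewrite -!eqPQ; [exact: P_lin | exact: P_RB].
Qed.

Section ExtendedRotaBaxter.
Variables (k : comNzRingType) (R : algType k) (lam kap : k) (P : R -> R).
Hypothesis P_ERB : extended_RB lam kap P.

HB.instance Definition _ := GRing.isLinear.Build k R R *:%R P (proj1 P_ERB).

Let PD : {morph P : x y / x + y} := linearD P.
Let PN : {morph P : x / - x} := linearN P.
Let PZ : scalable P := linearZZ P.
Let P_RB : forall x y,
    P x * P y = P (x * P y) + P (P x * y) + lam *: P (x * y) + kap *: (x * y)
  := proj2 P_ERB.

Lemma extended_RB_mul_tildeP u v :
  P u * tildeP lam P v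
    = P (u * tildeP lam P v) + tildeP lam P (P u * v) - kap *: (u * v).
Proof.
rewrite /tildeP; expand_linear PD PN PZ; rewrite P_RB.
lmodule_ring [:: P (u * P v); P (P u * v); P (u * v); P u * v; u * v].
Qed.

Lemma extended_RB_tildeP_mul u v :
  tildeP lam P u * P v
    = tildeP lam P (u * P v) + P (tildeP lam P u * v) - kap *: (u * v).
Proof.
rewrite /tildeP; expand_linear PD PN PZ; rewrite P_RB.
lmodule_ring [:: P (u * P v); P (P u * v); P (u * v); u * P v; u * v].
Qed.

Lemma extended_RB_scale c :
  extended_RB (c * lam) (c ^+ 2 * kap) (fun x => c *: P x).
Proof.
split=> [a x y | x y]; expand_linear PD PN PZ.
  by lmodule_ring [:: P x; P y].
rewrite P_RB; lmodule_ring [:: P (x * P y); P (P x * y); P (x * y); x * y].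
Qed.

Lemma extended_RB_shift d :
  extended_RB (lam - d *+ 2) (kap - lam * d + d ^+ 2) (fun x => P x + d *: x).
Proof.
split=> [a x y | x y]; expand_linear PD PN PZ.
  by lmodule_ring [:: P x; P y; x; y].
rewrite P_RB.
lmodule_ring [:: P (x * P y); P (P x * y); P (x * y); x * P y; P x * y; x * y].
Qed.

End ExtendedRotaBaxter.

Theorem corollary2p5 (k : comRingType) (R : algType k) (lam kap : k)
  (P : R -> R) :
  extended_RB lam kap P ->
  (forall u v : R,
     P u * tildeP lam P v
       = P (u * tildeP lam P v) + tildeP lam P (P u * v) - kap *: (u * v)
   /\ tildeP lam P u * P v
       = tildeP lam P (u * P v) + P (tildeP lam P u * v) - kap *: (u * v))
  /\
  (forall a b : k,
     extended_RB (lam * (a + b)) (a * b * lam ^+ 2 + (a - b) ^+ 2 * kap)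
       (fun x => a *: P x + b *: tildeP lam P x)).
Proof.
move=> P_ERB; split=> [u v | a b].
  by split; [apply: extended_RB_mul_tildeP | apply: extended_RB_tildeP_mul].
have Q_ERB := extended_RB_shift (extended_RB_scale P_ERB (a - b)) (- (b * lam)).
have -> : lam * (a + b) = (a - b) * lam - - (b * lam) *+ 2 by ring.
have -> : a * b * lam ^+ 2 + (a - b) ^+ 2 * kap
    = (a - b) ^+ 2 * kap - (a - b) * lam * - (b * lam) + (- (b * lam)) ^+ 2.
  by ring.
apply: (eq_extended_RB _ Q_ERB) => x; rewrite /tildeP.
lmodule_ring [:: P x; x].
Qed.
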